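(* Assume (H1), (H2.3) and (H2.4). Then $(I_{X^{+}}-\mathcal{F}_{s}V^{+})|_{\widehat{X}^{+}}$, regarded as an operator from $\widehat{X}^{+}$ to $\widehat{X}^{+}$ (with the norm of $\widehat{X}^{+}$), is invertible with bounded inverse.
   Context: Let $d\ge 1$ be an integer and $\tau>0$, $h>0$ real. $X$, $X^{+}$, $X^{\pm}$ are real normed spaces of functions $[-\tau,0]\to\mathbb{R}^{d}$, $[0,h]\to\mathbb{R}^{d}$, $[-\tau,h]\to\mathbb{R}^{d}$, respectively. $V\colon X\times X^{+}\to X^{\pm}$ and $\mathcal{F}_{s}\colon X^{\pm}\to X^{+}$ are linear; $V^{+}z:=V(0_{X},z)$. Hypotheses: (H1) $I_{X^{+}}-\mathcal{F}_{s}V^{+}\colon X^{+}\to X^{+}$ is invertible with bounded inverse and for each $\phi\in X$ the equation $z=\mathcal{F}_{s}V(\phi,z)$ has a unique solution in $X^{+}$. There is a linear subspace $\widehat{X}^{+}\subseteq X^{+}$ with a norm $\|\cdot\|_{\widehat{X}^{+}}$ making it complete such that (H2.3) there is $\hat{c}_{1}>0$ with $\|z\|_{X^{+}}\le\hat{c}_{1}\|z\|_{\widehat{X}^{+}}$ for all $z\in\widehat{X}^{+}$, and (H2.4) the range of $\mathcal{F}_{s}V^{+}\colon X^{+}\to X^{+}$ is contained in $\widehat{X}^{+}$ and $\mathcal{F}_{s}V^{+}\colon X^{+}\to\widehat{X}^{+}$ is bounded. *)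

From HB Require Import structures.
From mathcomp Require Import all_boot all_order all_algebra.
From mathcomp Require Import all_classical all_reals topology normedtype.
Set Implicit Arguments. Unset Strict Implicit. Unset Printing Implicit Defensive.
Import Order.TTheory GRing.Theory Num.Theory.
Import numFieldNormedType.Exports.
Local Open Scope ring_scope.

Definition Vplus (R : realType) (X Xp Xpm : normedModType R)
  (V : X * Xp -> Xpm) (z : Xp) : Xpm := V (0, z).

Definition bounded_op (R : realType) (A B : normedModType R) (f : A -> B) : Prop :=
  exists c : R, forall x : A, `|f x| <= c * `|x|.

From HB Require Import structures.
From mathcomp Require Import all_boot all_order all_algebra.
From mathcomp Require Import all_classical all_reals topology normedtype.
Import Order.TTheory GRing.Theory Num.Theory.
Import numFieldNormedType.Exports.
Local Open Scope ring_scope.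
Set Implicit Arguments.

(* With K := F_s V^+ and C := (I - K)^-1 on X^+, the identity
   (I - K)^-1 = I + K (I - K)^-1 shows that on Xhat the inverse is
   y |-> y + K (C y).  Since K maps X^+ boundedly into Xhat, this is a bounded
   operator of Xhat: ||y + K C y|| <= (1 + ||K|| ||C|| c1) ||y|| by (H2.3). *)

Lemma bounded_op_ge0 (R : realType) (A B : normedModType R) (f : A -> B) :
  bounded_op f -> exists2 c : R, 0 <= c & forall x, `|f x| <= c * `|x|.
Proof.
move=> [c Hc]; exists `|c| => // x.
exact: le_trans (Hc x) (ler_wpM2r (normr_ge0 _) (ler_norm c)).
Qed.

Section BoundedOp.
Variables (R : realType) (A B D : normedModType R).

Lemma bounded_op_comp (f : B -> D) (g : A -> B) :
  bounded_op f -> bounded_op g -> bounded_op (f \o g).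
Proof.
move=> bf [cg Hg]; have [cf cf0 Hf] := bounded_op_ge0 bf; exists (cf * cg) => x /=.
by rewrite -mulrA; apply: le_trans (Hf _) (ler_wpM2l cf0 (Hg x)).
Qed.

Lemma bounded_op_addid (f : A -> A) :
  bounded_op f -> bounded_op (fun x => x + f x).
Proof.
move=> [c Hc]; exists (1 + c) => x.
rewrite mulrDl mul1r; apply: le_trans (ler_normD _ _) _.
by rewrite lerD2l.
Qed.

End BoundedOp.

Lemma Vplus_linear (R : realType) (X Xp Xpm : normedModType R)
  (V : {linear (X * Xp)%type -> Xpm}) : linear (Vplus V).
Proof.
move=> a z w; rewrite /Vplus.
have -> : ((0 : X), a *: z + w) = a *: ((0 : X), z) + ((0 : X), w).
  by apply/eqP; rewrite xpair_eqE /= scaler0 addr0 !eqxx.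
by rewrite linearP.
Qed.

Section RestrictedInverse.
Variables (R : realType) (X Xp Xpm : normedModType R).
Variables (V : {linear (X * Xp)%type -> Xpm}) (Fs : {linear Xpm -> Xp}).
Variables (Xhat : completeNormedModType R) (j : {linear Xhat -> Xp}).
Hypothesis j_inj : injective j.
Variables (C : {linear Xp -> Xp}) (G : Xp -> Xhat).
Hypothesis C_invl : forall z, C (z - Fs (Vplus V z)) = z.
Hypothesis C_invr : forall z, C z - Fs (Vplus V (C z)) = z.
Hypothesis jG : forall z, j (G z) = Fs (Vplus V z).

Lemma G_linear : linear G.
Proof. by move=> a z w; apply: j_inj; rewrite linearP !jG Vplus_linear linearP. Qed.

Definition restricted_inverse (y : Xhat) : Xhat := y + G (C (j y)).

Lemma restricted_inverse_linear : linear restricted_inverse.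
Proof.
by move=> a y w; rewrite /restricted_inverse !linearP G_linear scalerDr addrACA.
Qed.

HB.instance Definition _ :=
  GRing.isLinear.Build R Xhat Xhat *:%R restricted_inverse
    restricted_inverse_linear.

Definition restricted_inverse_lin : {linear Xhat -> Xhat} := restricted_inverse.

Lemma j_restricted_inverse y : j (restricted_inverse_lin y) = C (j y).
Proof. by rewrite linearD jG -{1}(C_invr (j y)) subrK. Qed.

Lemma restricted_inverseK y :
  j (restricted_inverse_lin y) - Fs (Vplus V (j (restricted_inverse_lin y))) = j y.
Proof. by rewrite j_restricted_inverse C_invr. Qed.

Lemma restricted_inverse_unique y y' :
  j y' = j y - Fs (Vplus V (j y)) -> restricted_inverse_lin y' = y.
Proof.
move=> y'E; apply: j_inj.
by rewrite j_restricted_inverse y'E C_invl.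
Qed.

Lemma bounded_restricted_inverse :
  bounded_op C -> bounded_op G -> bounded_op j ->
  bounded_op restricted_inverse_lin.
Proof.
move=> bC bG bj; apply: bounded_op_addid.
by do 2![apply: bounded_op_comp => //].
Qed.

End RestrictedInverse.

Theorem lemma4p6 (R : realType) (X Xp Xpm : normedModType R)
  (V : {linear (X * Xp)%type -> Xpm}) (Fs : {linear Xpm -> Xp})
  (Xhat : completeNormedModType R) (j : {linear Xhat -> Xp})
  (j_inj : injective j) :
  (* (H1) *)
  (exists C : {linear Xp -> Xp},
      (forall z, C (z - Fs (Vplus V z)) = z) /\
      (forall z, C z - Fs (Vplus V (C z)) = z) /\
      bounded_op C) ->
  (forall phi : X, exists! z : Xp, z = Fs (V (phi, z))) ->
  (* (H2.3) *)
  (exists c1 : R, 0 < c1 /\ forall y : Xhat, `|j y| <= c1 * `|y|) ->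
  (* (H2.4): range of Fs V^+ lies in Xhat, and Fs V^+ : Xp -> Xhat is bounded *)
  (exists G : Xp -> Xhat,
      (forall z, j (G z) = Fs (Vplus V z)) /\ bounded_op G) ->
  (* conclusion: the restriction to Xhat, as an operator Xhat -> Xhat,
     has a bounded (linear) two-sided inverse B *)
  exists B : {linear Xhat -> Xhat},
    (forall y : Xhat, j (B y) - Fs (Vplus V (j (B y))) = j y) /\
    (forall y y' : Xhat, j y' = j y - Fs (Vplus V (j y)) -> B y' = y) /\
    bounded_op B.
Proof.
move=> [C [C_invl [C_invr bC]]] _ [c1 [_ bj]] [G [jG bG]].
exists (restricted_inverse_lin _ _ _ j_inj C _ jG); split; [|split].
- exact: restricted_inverseK.
- exact: restricted_inverse_unique.
- by apply: bounded_restricted_inverse => //; exists c1.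
Qed.
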